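(* Let $f:\mathbb{R}^n\to\mathbb{R}$ be subdifferentiable with subgradient Lipschitz continuous with constant $L>0$ (i.e. $\|g_x-g_y\|\le L\|x-y\|$ for all $x,y$, $g_x\in\partial f(x)$, $g_y\in\partial f(y)$). Let $M\ge 0$ be an integer, $0<\gamma<1$, and $(\eta_k)_{k\ge0}$ a sequence of positive numbers with $\sum_k\eta_k<\infty$. Consider iterates $x_{k+1}=x_k+\alpha_k d_k$, where at step $k$ we are given $g_k\in\partial f(x_k)$ and a nonzero search direction $d_k\in\mathbb{R}^n$, and $\alpha_k=(1/2)^{h_k}$ where $h_k$ is the smallest integer in $\{0,1,2,\dots\}$ such that $$f(x_k+\alpha_k d_k)\le \max_{0\le j\le \min\{k,M\}} f(x_{k-j})+\gamma\alpha_k g_k^Td_k+\eta_k .$$ Then for each $k$, either $\alpha_k=1$ or $$\alpha_k\ge \frac{\gamma-1}{L}\,\frac{g_k^Td_k}{\|d_k\|^2}.$$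
   Context: A subgradient of $f$ at $x$ is any $g\in\mathbb{R}^n$ with $f(y)\ge f(x)+g^T(y-x)$ for all $y$; $\partial f(x)$ is the set of subgradients at $x$, and $f$ is subdifferentiable if $\partial f(x)\neq\emptyset$ everywhere. *)

From HB Require Import structures.
From mathcomp Require Import all_boot all_order all_algebra.
From mathcomp Require Import all_classical all_reals all_analysis.
Set Implicit Arguments. Unset Strict Implicit. Unset Printing Implicit Defensive.
Import Order.TTheory GRing.Theory Num.Theory.
Local Open Scope ring_scope.

Definition dotv (R : realType) (n : nat) (u v : 'rV[R]_n) : R :=
  \sum_(i < n) u 0 i * v 0 i.

Definition enorm (R : realType) (n : nat) (u : 'rV[R]_n) : R :=
  Num.sqrt (dotv u u).

Definition subgradient (R : realType) (n : nat) (f : 'rV[R]_n -> R)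
  (x g : 'rV[R]_n) : Prop :=
  forall y, f x + dotv g (y - x) <= f y.

Definition subdifferentiable (R : realType) (n : nat) (f : 'rV[R]_n -> R) :=
  forall x, exists g, subgradient f x g.

Definition subgrad_lipschitz (R : realType) (n : nat) (f : 'rV[R]_n -> R)
  (L : R) : Prop :=
  forall x y gx gy, subgradient f x gx -> subgradient f y gy ->
    enorm (gx - gy) <= L * enorm (x - y).

Definition nm_max (R : realType) (n : nat) (f : 'rV[R]_n -> R)
  (x : nat -> 'rV[R]_n) (M k : nat) : R :=
  \big[Num.max/f (x k)]_(j < (minn k M).+1) f (x (k - j)%N).

Definition accept (R : realType) (n : nat) (f : 'rV[R]_n -> R)
  (x g d : nat -> 'rV[R]_n) (eta : nat -> R) (M : nat) (gamma : R)
  (k : nat) (a : R) : Prop :=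
  f (x k + a *: d k) <= nm_max f x M k + gamma * a * dotv (g k) (d k) + eta k.

From HB Require Import structures.
From mathcomp Require Import all_boot all_order all_algebra.
From mathcomp Require Import all_classical all_reals all_analysis.
From mathcomp Require Import ring lra.
Set Implicit Arguments. Unset Strict Implicit. Unset Printing Implicit Defensive.
Import Order.TTheory GRing.Theory Num.Theory numFieldNormedType.Exports.
Local Open Scope ring_scope.

(* For [h k > 0] the trial step [a = 2 alpha_k] was rejected, and since the
   nonmonotone reference value dominates [f (x k)] and [eta k > 0] this gives
   [f (x k + a d) > f (x k) + gamma a <g, d>]. The descent lemma
   [f (x + a d) <= f x + a <g, d> + L a^2 |d|^2 / 2] then forces
   [(gamma - 1) <g, d> < L a |d|^2 / 2], which is the bound on [alpha_k = a / 2].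
   Lipschitz subgradients are not assumed to be gradients, so the descent lemma
   is obtained by chaining subgradient inequalities along an [N]-step grid on
   [x, x + a d], which costs an extra [L a^2 |d|^2 / (2 N)], and letting [N]
   grow. *)

Section EuclideanInnerProduct.
Variables (R : realType) (n : nat).
Implicit Types (u v w : 'rV[R]_n) (t : R).

Lemma dotvC u v : dotv u v = dotv v u.
Proof. by apply: eq_bigr => i _; rewrite mulrC. Qed.

Lemma dotvDl u v w : dotv (u + v) w = dotv u w + dotv v w.
Proof. by rewrite /dotv -big_split; apply: eq_bigr => i _; rewrite !mxE mulrDl. Qed.

Lemma dotvZl t u w : dotv (t *: u) w = t * dotv u w.
Proof. by rewrite /dotv mulr_sumr; apply: eq_bigr => i _; rewrite !mxE mulrA. Qed.

Lemma dotvNl u w : dotv (- u) w = - dotv u w.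
Proof. by rewrite -scaleN1r dotvZl mulN1r. Qed.

Lemma dotvBl u v w : dotv (u - v) w = dotv u w - dotv v w.
Proof. by rewrite dotvDl dotvNl. Qed.

Lemma dotvZr t u w : dotv u (t *: w) = t * dotv u w.
Proof. by rewrite dotvC dotvZl dotvC. Qed.

Lemma dotvBr u v w : dotv w (u - v) = dotv w u - dotv w v.
Proof. by rewrite dotvC dotvBl !(dotvC w). Qed.

Lemma dotv0l w : dotv 0 w = 0.
Proof. by rewrite /dotv big1 // => i _; rewrite mxE mul0r. Qed.

Lemma dotvv_ge0 u : 0 <= dotv u u.
Proof. by apply: sumr_ge0 => i _; rewrite -expr2 sqr_ge0. Qed.

Lemma dotvv_eq0 u : (dotv u u == 0) = (u == 0).
Proof.
apply/idP/eqP => [/eqP uu0|->]; last by rewrite dotv0l.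
apply/rowP => i; rewrite mxE; apply/eqP; rewrite -[_ == 0]orbb -mulf_eq0.
by rewrite (psumr_eq0P _ uu0) // => j _; rewrite -expr2 sqr_ge0.
Qed.

Lemma enorm_ge0 u : 0 <= enorm u.
Proof. exact: sqrtr_ge0. Qed.

Lemma enorm_sqr u : enorm u ^+ 2 = dotv u u.
Proof. by rewrite sqr_sqrtr // dotvv_ge0. Qed.

Lemma enorm_gt0 u : (0 < enorm u) = (u != 0).
Proof. by rewrite sqrtr_gt0 lt_def dotvv_ge0 andbT dotvv_eq0. Qed.

Lemma enormZ t u : enorm (t *: u) = `|t| * enorm u.
Proof. by rewrite /enorm dotvZl dotvZr mulrA -expr2 sqrtrM ?sqr_ge0 // sqrtr_sqr. Qed.

(* Expand [0 <= |v| u - |u| v|^2 = 2 |u| |v| (|u| |v| - <u, v>)]. *)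
Lemma cauchy_schwarz u v : dotv u v <= enorm u * enorm v.
Proof.
have [->|u0] := eqVneq u 0; first by rewrite dotv0l mulr_ge0 ?enorm_ge0.
have [->|v0] := eqVneq v 0; first by rewrite dotvC dotv0l mulr_ge0 ?enorm_ge0.
have := dotvv_ge0 (enorm v *: u - enorm u *: v).
rewrite !(dotvBl, dotvBr, dotvZl, dotvZr) (dotvC v u) -!enorm_sqr.
have : 0 < enorm u * enorm v by rewrite mulr_gt0 ?enorm_gt0.
nra.
Qed.

End EuclideanInnerProduct.

Lemma le_of_le_add_divn (R : archiFieldType) (a b c : R) : 0 <= c ->
  (forall N : nat, (0 < N)%N -> a <= b + c / N%:R) -> a <= b.
Proof.
move=> c0 abc; apply/ler_addgt0Pr => e e0.
have ce0 : 0 <= c / e by rewrite divr_ge0 // ltW.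
have N_gt := archi_boundP ce0; set N := Num.bound _ in N_gt.
have N0 : 0 < N%:R :> R by apply: le_lt_trans N_gt.
apply: (le_trans (abc N _)); first by rewrite -(ltr0n R).
by rewrite lerD2l ler_pdivrMr // mulrC -ler_pdivrMr // ltW.
Qed.

Section SubgradientDescent.
Variables (R : realType) (n : nat) (f : 'rV[R]_n -> R) (L : R).
Hypotheses (f_sd : subdifferentiable f) (L_ge0 : 0 <= L) (f_lip : subgrad_lipschitz f L).

Lemma subgradient_le y G z : subgradient f y G -> f y <= f z + dotv G (y - z).
Proof. by move=> /(_ z); rewrite -opprB dotvC dotvNl dotvC; lra. Qed.

Variables (x g d : 'rV[R]_n).
Hypothesis (g_sub : subgradient f x g).

Lemma subgrad_lipschitz_dotv y G : subgradient f y G ->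
  dotv (G - g) d <= L * enorm (y - x) * enorm d.
Proof.
move=> G_sub; apply: le_trans (cauchy_schwarz _ _) _.
by rewrite ler_wpM2r ?enorm_ge0 // f_lip.
Qed.

Lemma subgrad_descent_step (t t' : R) : 0 <= t <= t' ->
  f (x + t' *: d) <= f (x + t *: d) + (t' - t) * (dotv g d + L * t' * enorm d ^+ 2).
Proof.
case/andP=> t0 tt'; have [G G_sub] := f_sd (x + t' *: d).
have [step_d len_d] : (x + t' *: d) - (x + t *: d) = (t' - t) *: d /\ (x + t' *: d) - x = t' *: d.
  by split; apply/rowP => i; rewrite !mxE; ring.
apply: le_trans (subgradient_le (x + t *: d) G_sub) _.
rewrite step_d dotvZr lerD2l ler_wpM2l ?subr_ge0 //.
have := subgrad_lipschitz_dotv G_sub.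
rewrite len_d enormZ ger0_norm ?(le_trans t0) // dotvBl; lra.
Qed.

Lemma subgrad_descent_grid (s : R) : 0 <= s -> forall i : nat,
  f (x + (s * i%:R) *: d) <=
    f x + s * i%:R * dotv g d + L * s ^+ 2 * enorm d ^+ 2 * (i%:R * i.+1%:R / 2).
Proof.
move=> s0; elim=> [|i IH]; first by rewrite !(mulr0, mul0r, scale0r, addr0).
have := @subgrad_descent_step (s * i%:R) (s * i.+1%:R).
rewrite mulr_ge0 ?ler_wpM2l ?ler_nat //= => /(_ isT) step.
apply: le_trans step _; rewrite -[i.+2%:R]natr1 -[i.+1%:R]natr1 in IH *.
nra.
Qed.

Lemma subgrad_descent (t : R) : 0 <= t ->
  f (x + t *: d) <= f x + t * dotv g d + L * t ^+ 2 * enorm d ^+ 2 / 2.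
Proof.
move=> t0; apply: (@le_of_le_add_divn _ _ _ (L * t ^+ 2 * enorm d ^+ 2 / 2)).
  by rewrite !mulr_ge0 ?enorm_ge0 ?invr_ge0 ?ler0n.
move=> N N0; have N0' : 0 < N%:R :> R by rewrite ltr0n.
have := subgrad_descent_grid (divr_ge0 t0 (ltW N0')) N.
rewrite divfK ?gt_eqF // -natr1 => /le_trans; apply.
rewrite -!addrA !lerD2l le_eqVlt; apply/orP; left; apply/eqP.
by field; rewrite gt_eqF.
Qed.

End SubgradientDescent.

Lemma rejected_step_gt (R : realType) (n : nat) (f : 'rV[R]_n -> R)
  (x g d : nat -> 'rV[R]_n) (eta : nat -> R) (M : nat) (gamma : R) k a :
  0 < eta k -> ~ accept f x g d eta M gamma k a ->
  f (x k) + gamma * a * dotv (g k) (d k) < f (x k + a *: d k).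
Proof.
move=> eta0 /negP; rewrite -ltNge => rej; apply: le_lt_trans rej.
have fx_le : f (x k) <= nm_max f x M k.
  by rewrite /nm_max; elim/big_rec: _ => // i r _ fr; rewrite le_max fr orbT.
lra.
Qed.

Lemma backtrack_step_lower_bound (R : realFieldType) (L gamma a gd D : R) :
  0 < L -> 0 < D -> 0 < a ->
  gamma * a * gd < a * gd + L * a ^+ 2 * D / 2 ->
  (gamma - 1) / L * (gd / D) <= a / 2.
Proof.
move=> L0 D0 a0 lt_step.
have -> : (gamma - 1) / L * (gd / D) = (gamma - 1) * gd / (L * D).
  by field; rewrite !gt_eqF.
rewrite ler_pdivrMr ?mulr_gt0 //; apply: ltW.
rewrite -(ltr_pM2l a0); nra.
Qed.

Theorem lemma3 (R : realType) (n : nat) (f : 'rV[R]_n -> R) (L : R)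
  (M : nat) (gamma : R) (eta : nat -> R)
  (x g d : nat -> 'rV[R]_n) (h : nat -> nat) :
  subdifferentiable f ->
  0 < L -> subgrad_lipschitz f L ->
  0 < gamma -> gamma < 1 ->
  (forall k, 0 < eta k) -> cvgn (series (eta : R^nat)) ->
  (forall k, subgradient f (x k) (g k)) ->
  (forall k, d k != 0) ->
  (forall k, x k.+1 = x k + (2^-1) ^+ h k *: d k) ->
  (forall k, accept f x g d eta M gamma k ((2^-1) ^+ h k)) ->
  (forall k (h' : nat), (h' < h k)%N -> ~ accept f x g d eta M gamma k ((2^-1) ^+ h')) ->
  forall k, (2^-1) ^+ h k = 1 :> R \/
    (gamma - 1) / L * (dotv (g k) (d k) / enorm (d k) ^+ 2) <= (2^-1) ^+ h k.
Proof.
move=> f_sd L0 f_lip _ _ eta0 _ g_sub d0 _ _ minimal k.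
case hk: (h k) => [|m]; [by left | right].
set a : R := (2^-1) ^+ m.
have a0 : 0 < a by rewrite exprn_gt0 // invr_gt0.
have := minimal k m; rewrite hk ltnSn => /(_ isT) /(rejected_step_gt (eta0 k)) rej.
have desc := subgrad_descent f_sd (ltW L0) f_lip (d k) (g_sub k) (ltW a0).
rewrite [_ ^+ m.+1]exprSr; apply: backtrack_step_lower_bound => //.
  by rewrite exprn_gt0 ?enorm_gt0.
by rewrite -(ltrD2l (f (x k))) addrA; apply: lt_le_trans rej desc.
Qed.
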